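(* Let $n\ge 1$ and consider a bin $B=(l_s,u_s]\times(l_t,u_t]\subseteq[0,n]^2$ with $l_s<u_s$, $l_t<u_t$, containing $o_i\ge 1$ observed rank pairs $(s_{i1},t_{i1}),\dots,(s_{io_i},t_{io_i})\in B$. Let $e_i=(u_s-l_s)(u_t-l_t)/n$ be its expected count. For a vertical split at $c\in(l_s,u_s)$, let $o_{i-}(c)=\#\{k: s_{ik}\le c\}$, $o_{i+}(c)=o_i-o_{i-}(c)$, $e_{i-}(c)=(c-l_s)(u_t-l_t)/n$ and $e_{i+}(c)=(u_s-c)(u_t-l_t)/n$. With the mi score $\mathrm{mi}(o,e)=\frac{o}{n}\log\frac{o}{e}$ (with the convention $0\log 0=0$), define $$\delta_i(c,\mathrm{mi})=\mathrm{mi}\big(o_{i+}(c),e_{i+}(c)\big)+\mathrm{mi}\big(o_{i-}(c),e_{i-}(c)\big)-\mathrm{mi}(o_i,e_i).$$ Then any $c^*\in(l_s,u_s)$ maximizing $\delta_i(c,\mathrm{mi})$ over $c\in(l_s,u_s)$ is one of the point coordinates $s_{i1},\dots,s_{io_i}$. The analogous statement holds for horizontal splits at $c\in(l_t,u_t)$ (with the roles of $s$ and $t$ interchanged), where the maximizer is one of $t_{i1},\dots,t_{io_i}$.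
   Context: Observations $(x_k,y_k)$, $k=1,\dots,n$, are converted to marginal ranks $s_k,t_k\in\{1,\dots,n\}$ (ties broken randomly), so under independence the rank pairs are uniform on the rank space $[0,n]^2$ and the expected number of points in a region of area $a$ is $a/n$. A bin is a rectangle $(l_s,u_s]\times(l_t,u_t]$; splitting it by a vertical line at $c$ produces a lower bin $(l_s,c]\times(l_t,u_t]$ and an upper bin $(c,u_s]\times(l_t,u_t]$ (a point with coordinate equal to $c$ is counted in the lower bin); horizontal splits are defined analogously in the $t$ coordinate. *)

From Stdlib Require Import Reals List.
Open Scope R_scope.

Definition mi (n : nat) (o : nat) (e : R) : R :=
  if Nat.eqb o 0 then 0 else INR o / INR n * ln (INR o / e).

Definition count_le (xs : list nat) (c : R) : nat :=
  length (filter (fun x => if Rle_dec (INR x) c then true else false) xs).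

(* delta_i(c, mi) for a split at c of the coordinate range (l,u], the other
   side of the bin being (l',u'], and xs the split-direction coordinates of
   the points in the bin. *)
Definition delta (n : nat) (xs : list nat) (l u l' u' c : R) : R :=
  let o := length xs in
  let om := count_le xs c in
  let op := (o - om)%nat in
  mi n op ((u - c) * (u' - l') / INR n)
  + mi n om ((c - l) * (u' - l') / INR n)
  - mi n o ((u - l) * (u' - l') / INR n).

(* With the count [m] of points below the split fixed, and [W] the side length
   of the bin along the other axis, the score of the lower bin is
   [(m/n) (ln (m n / W) - ln (c - l))], a convex function of [c] that is
   strictly convex when [m > 0]; likewise for the upper bin in [u - c].  Away
   from the point coordinates [m] is locally constant, and as the bin holds at
   least one point, [delta] is strictly midpoint convex there, so it cannot
   attain a maximum. *)
From Stdlib Require Import Reals List Lra Lia Classical.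
Open Scope R_scope.

Lemma mi_zero (n : nat) (e : R) : mi n 0 e = 0.
Proof. reflexivity. Qed.

Lemma mi_width (n k : nat) (W x : R) :
  k <> 0%nat -> (1 <= n)%nat -> 0 < W -> 0 < x ->
  mi n k (x * W / INR n) = INR k / INR n * (ln (INR k * INR n / W) - ln x).
Proof.
  intros Hk Hn HW Hx. unfold mi.
  rewrite (proj2 (Nat.eqb_neq k 0) Hk).
  assert (HK : 0 < INR k) by (apply lt_0_INR; lia).
  assert (HN : 0 < INR n) by (apply lt_0_INR; lia).
  replace (INR k / (x * W / INR n)) with (INR k * INR n / W * / x) by (field; lra).
  rewrite ln_mult, ln_Rinv; [ring | lra | | apply Rinv_0_lt_compat; lra].
  apply Rdiv_lt_0_compat; nra.
Qed.

Lemma ln_midpoint_lt (x h : R) : 0 < h < x -> ln (x - h) + ln (x + h) < 2 * ln x.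
Proof.
  intros Hh.
  rewrite <- ln_mult by lra.
  replace (2 * ln x) with (ln (x * x)) by (rewrite ln_mult by lra; ring).
  apply ln_increasing; nra.
Qed.

Lemma mi_midpoint_strict_convex (n k : nat) (W x h : R) :
  k <> 0%nat -> (1 <= n)%nat -> 0 < W -> 0 < h < x ->
  2 * mi n k (x * W / INR n)
  < mi n k ((x - h) * W / INR n) + mi n k ((x + h) * W / INR n).
Proof.
  intros Hk Hn HW Hh.
  rewrite !mi_width by (auto; lra).
  assert (Hkn : 0 < INR k / INR n)
    by (apply Rdiv_lt_0_compat; apply lt_0_INR; lia).
  pose proof (ln_midpoint_lt x h Hh).
  set (K := ln (INR k * INR n / W)) in *.
  nra.
Qed.

Lemma mi_midpoint_convex (n k : nat) (W x h : R) :
  (1 <= n)%nat -> 0 < W -> 0 < h < x ->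
  2 * mi n k (x * W / INR n)
  <= mi n k ((x - h) * W / INR n) + mi n k ((x + h) * W / INR n).
Proof.
  intros Hn HW Hh. destruct (Nat.eq_dec k 0) as [-> | Hk].
  - rewrite !mi_zero. lra.
  - left. apply mi_midpoint_strict_convex; auto.
Qed.

Lemma count_le_le_length (xs : list nat) (c : R) : (count_le xs c <= length xs)%nat.
Proof.
  unfold count_le. induction xs as [|x xs IH]; simpl; [lia|].
  destruct (Rle_dec (INR x) c); simpl; lia.
Qed.

Lemma count_le_locally_constant (xs : list nat) (c : R) :
  (forall x, In x xs -> INR x <> c) ->
  exists h, 0 < h /\
    forall d, c - h <= d <= c + h -> count_le xs d = count_le xs c.
Proof.
  unfold count_le. induction xs as [|y ys IH]; intros Hoff.
  - exists 1. split; [lra | reflexivity].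
  - destruct IH as [h [Hh Hconst]]; [intros x Hx; apply Hoff; now right|].
    assert (Hy : 0 < Rabs (INR y - c))
      by (apply Rabs_pos_lt; specialize (Hoff y (or_introl eq_refl)); lra).
    exists (Rmin h (Rabs (INR y - c) / 2)). split; [apply Rmin_glb_lt; lra|].
    intros d Hd.
    pose proof (Rmin_l h (Rabs (INR y - c) / 2)).
    pose proof (Rmin_r h (Rabs (INR y - c) / 2)).
    simpl. destruct (Rle_dec (INR y) d), (Rle_dec (INR y) c); simpl;
      try (rewrite (Hconst d) by lra; reflexivity);
      exfalso; unfold Rabs in *; destruct (Rcase_abs (INR y - c)); lra.
Qed.

Lemma delta_midpoint_strict_convex (n : nat) (xs : list nat) (l u l' u' c h : R) :
  (1 <= n)%nat -> l' < u' -> (1 <= length xs)%nat ->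
  0 < h -> l < c - h -> c + h < u ->
  count_le xs (c - h) = count_le xs c -> count_le xs (c + h) = count_le xs c ->
  2 * delta n xs l u l' u' c < delta n xs l u l' u' (c - h) + delta n xs l u l' u' (c + h).
Proof.
  intros Hn Hl' Hlen Hh Hl Hu Hminus Hplus.
  unfold delta. rewrite Hminus, Hplus.
  set (m := count_le xs c). set (o := length xs). set (W := u' - l').
  assert (Hmo : (m <= o)%nat) by apply count_le_le_length.
  assert (HW : 0 < W) by (unfold W; lra).
  replace (u - (c - h)) with ((u - c) + h) by ring.
  replace (u - (c + h)) with ((u - c) - h) by ring.
  replace (c - h - l) with ((c - l) - h) by ring.
  replace (c + h - l) with ((c - l) + h) by ring.
  destruct (Nat.eq_dec m 0) as [Hm | Hm].
  - pose proof (mi_midpoint_strict_convex n (o - m) W (u - c) h ltac:(lia) Hn HW ltac:(lra)).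
    pose proof (mi_midpoint_convex n m W (c - l) h Hn HW ltac:(lra)).
    lra.
  - pose proof (mi_midpoint_convex n (o - m) W (u - c) h Hn HW ltac:(lra)).
    pose proof (mi_midpoint_strict_convex n m W (c - l) h Hm Hn HW ltac:(lra)).
    lra.
Qed.

Lemma delta_argmax_at_point (n : nat) (xs : list nat) (l u l' u' cstar : R) :
  (1 <= n)%nat -> l' < u' -> (1 <= length xs)%nat -> l < cstar < u ->
  (forall c, l < c < u -> delta n xs l u l' u' c <= delta n xs l u l' u' cstar) ->
  exists x, In x xs /\ cstar = INR x.
Proof.
  intros Hn Hl' Hlen Hc Hmax.
  apply NNPP. intros Hoff.
  destruct (count_le_locally_constant xs cstar) as [h0 [Hh0 Hconst]].
  { intros x Hx E. apply Hoff. now exists x. }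
  set (h := Rmin h0 (Rmin (cstar - l) (u - cstar)) / 2).
  assert (Hh : 0 < h /\ h < h0 /\ h < cstar - l /\ h < u - cstar).
  { unfold h.
    pose proof (Rmin_l h0 (Rmin (cstar - l) (u - cstar))).
    pose proof (Rmin_r h0 (Rmin (cstar - l) (u - cstar))).
    pose proof (Rmin_l (cstar - l) (u - cstar)).
    pose proof (Rmin_r (cstar - l) (u - cstar)).
    assert (0 < Rmin h0 (Rmin (cstar - l) (u - cstar)))
      by (repeat apply Rmin_glb_lt; lra).
    lra. }
  pose proof (delta_midpoint_strict_convex n xs l u l' u' cstar h Hn Hl' Hlen
                ltac:(lra) ltac:(lra) ltac:(lra)
                (Hconst (cstar - h) ltac:(lra)) (Hconst (cstar + h) ltac:(lra))).
  pose proof (Hmax (cstar - h) ltac:(lra)).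
  pose proof (Hmax (cstar + h) ltac:(lra)).
  lra.
Qed.

Lemma argmax_at_projection (f : nat * nat -> nat) (n : nat) (pts : list (nat * nat))
    (l u l' u' cstar : R) :
  (1 <= n)%nat -> l' < u' -> (1 <= length pts)%nat -> l < cstar < u ->
  (forall c, l < c < u ->
     delta n (map f pts) l u l' u' c <= delta n (map f pts) l u l' u' cstar) ->
  exists p, In p pts /\ cstar = INR (f p).
Proof.
  intros Hn Hl' Hlen Hc Hmax.
  destruct (delta_argmax_at_point n (map f pts) l u l' u' cstar Hn Hl'
              ltac:(now rewrite length_map) Hc Hmax) as [x [Hx ->]].
  apply in_map_iff in Hx. destruct Hx as [p [<- Hp]].
  now exists p.
Qed.

Theorem proposition2 :
  forall (n : nat) (ls us lt ut : R) (pts : list (nat * nat)),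
    (1 <= n)%nat ->
    0 <= ls -> ls < us -> us <= INR n ->
    0 <= lt -> lt < ut -> ut <= INR n ->
    (1 <= length pts)%nat ->
    (forall p, In p pts ->
       (1 <= fst p <= n)%nat /\ (1 <= snd p <= n)%nat /\
       ls < INR (fst p) <= us /\ lt < INR (snd p) <= ut) ->
    (* vertical splits *)
    (forall cstar, ls < cstar < us ->
       (forall c, ls < c < us ->
          delta n (map fst pts) ls us lt ut c
          <= delta n (map fst pts) ls us lt ut cstar) ->
       exists p, In p pts /\ cstar = INR (fst p))
    /\
    (* horizontal splits *)
    (forall cstar, lt < cstar < ut ->
       (forall c, lt < c < ut ->
          delta n (map snd pts) lt ut ls us c
          <= delta n (map snd pts) lt ut ls us cstar) ->
       exists p, In p pts /\ cstar = INR (snd p)).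
Proof.
  intros n ls us lt ut pts Hn _ Hs _ _ Ht _ Hlen _.
  split; intros cstar Hc Hmax.
  - exact (argmax_at_projection fst n pts ls us lt ut cstar Hn Ht Hlen Hc Hmax).
  - exact (argmax_at_projection snd n pts lt ut ls us cstar Hn Hs Hlen Hc Hmax).
Qed.
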